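(* Let $G$ be a pronilpotent group generated (topologically) by closed subgroups $G_1,\dots,G_t$ such that for every $i\geq1$ the closed subgroup $\gamma_i(G)$ is generated by the subgroups $\gamma_i(G)\cap G_j$, $1\leq j\leq t$. Then $G=G_1G_2\cdots G_t$.
   Context: In a profinite group, $\gamma_1(G)=G$ and $\gamma_i(G)$ is the closed subgroup generated by all commutators $[x,g]$ with $x\in\gamma_{i-1}(G)$, $g\in G$. A pronilpotent group is an inverse limit of finite nilpotent groups. *)

From HB Require Import structures.
From mathcomp Require Import all_boot monoid.
From mathcomp Require Import boolp classical_sets topology.

Set Implicit Arguments.
Unset Strict Implicit.
Unset Printing Implicit Defensive.

Local Open Scope classical_set_scope.

#[short(type="groupTopType")]
HB.structure Definition GroupTop :=
  {G of monoid.Group G & Topological G}.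

Section ProfiniteDefs.
Variable G : groupTopType.

Local Notation mulg := (@monoid.mul G).
Local Notation invg := (@monoid.inv G).
Local Notation oneg := (@monoid.one G).
Local Notation commg := (@monoid.commg G).

Definition is_topological_group : Prop :=
  continuous (fun p : G * G => mulg p.1 p.2) /\ continuous invg.

Definition is_profinite : Prop :=
  [/\ is_topological_group, compact [set: G], hausdorff_space G
    & totally_disconnected [set: G]].

Definition is_subgroup (H : set G) : Prop :=
  [/\ H oneg, (forall x y, H x -> H y -> H (mulg x y))
    & (forall x, H x -> H (invg x))].

Definition is_closed_subgroup (H : set G) : Prop :=
  is_subgroup H /\ closed H.

Definition is_normal_subgroup (N : set G) : Prop :=
  is_subgroup N /\ (forall x g, N x -> N (mulg (invg g) (mulg x g))).

Definition gen (S : set G) : set G :=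
  \bigcap_(H in [set H | is_subgroup H /\ S `<=` H]) H.

Definition cl_gen (S : set G) : set G :=
  \bigcap_(H in [set H | is_closed_subgroup H /\ S `<=` H]) H.

Definition comms (A : set G) : set G :=
  [set commg x g | x in A & g in [set: G]].

(* closed lower central series: gamma (n.+1) = gamma_{n+1}(G);
   gamma 0 = gamma 1 = G *)
Fixpoint gamma (n : nat) : set G :=
  match n with
  | 0 => [set: G]
  | 1 => [set: G]
  | m.+1 => cl_gen (comms (gamma m))
  end.

Fixpoint agamma (n : nat) : set G :=
  match n with
  | 0 => [set: G]
  | 1 => [set: G]
  | m.+1 => gen (comms (agamma m))
  end.

(* pronilpotent: profinite and every (finite, continuous) quotient G/N by an
   open normal subgroup N is nilpotent, i.e. gamma_n(G/N) = 1 for some n,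
   i.e. gamma_n(G) <= N (abstract lower central series). *)
Definition is_pronilpotent : Prop :=
  is_profinite /\
  forall N : set G, is_normal_subgroup N -> open N ->
    exists n : nat, agamma n `<=` N.

Definition prod_set (t : nat) (Gs : 'I_t -> set G) : set G :=
  [set x | exists f : 'I_t -> G, (forall j, Gs j (f j)) /\
     x = \big[mulg/oneg]_(j < t) f j].

End ProfiniteDefs.

From HB Require Import structures.
From mathcomp Require Import all_boot monoid.
From mathcomp Require Import boolp classical_sets filter topology.

Set Implicit Arguments.
Unset Strict Implicit.
Unset Printing Implicit Defensive.

Local Open Scope classical_set_scope.

(* Since [G_1 ... G_t] is compact, hence closed, and the open normal subgroups
   of a profinite group form a basis of neighbourhoods of 1, it suffices to
   show [G = G_1 ... G_t N] for every open normal subgroup [N].  Let [K_i] be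
   the preimage of [gamma_i(G/N)]; as [G/N] is nilpotent, it suffices to show
   [G = G_1 ... G_t K_i] for all [i >= 1], by induction on [i].  Modulo
   [K_(i+1)] the subgroup [gamma_i(G)] is central, so the products
   [c_1 ... c_t] with [c_j] in [gamma_i(G) :&: G_j] form, modulo [K_(i+1)],
   a subgroup, closed since [K_(i+1)] is open; it contains the generators of
   [gamma_i(G)], hence all of [gamma_i(G)] and of [K_i].  Distributing such a
   product over the [G_j]-components of an element of [G_1 ... G_t], which
   is possible modulo [K_(i+1)], gives the induction step. *)

Lemma cvg_clopen_iff (T : topologicalType) (X : Type) (F : set_system X)
    {FF : Filter F} (f : X -> T) (a : T) (V : set T) :
  clopen V -> f @ F --> a -> \forall x \near F, V (f x) <-> V a.
Proof.
move=> [oV cV] fa; have [Va|nVa] := pselect (V a).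
  have FV : F (f @^-1` V) := fa _ (open_nbhs_nbhs (conj oV Va)).
  by apply: filterS FV => x.
have oVC : open (~` V) by exact: closed_openC.
have FV : F (f @^-1` (~` V)) := fa _ (open_nbhs_nbhs (conj oVC nVa)).
by apply: filterS FV => x.
Qed.

Section QuasiComponent.
Variable T : topologicalType.
Hypothesis cT : compact [set: T].

Definition quasi_component (x : T) :=
  \bigcap_(C in [set C : set T | clopen C /\ C x]) C.

Lemma quasi_component_closed x : closed (quasi_component x).
Proof. by apply: closed_bigI => C [[]]. Qed.

Lemma quasi_component_refl x : quasi_component x x.
Proof. by move=> C []. Qed.

Lemma quasi_component_sub_clopen x (W : set T) : open W ->
  quasi_component x `<=` W -> exists C, [/\ clopen C, C x & C `<=` W].
Proof.
move=> oW QW; apply: contrapT => noC.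
pose F := filter_from [set C : set T | clopen C /\ C x] (fun C => ~` W `&` C).
have FF : Filter F.
  apply: filter_from_filter; first by exists setT; split => //; exact: clopenT.
  move=> C1 C2 [c1 x1] [c2 x2]; exists (C1 `&` C2).
    by split=> //; exact: clopenI.
  by move=> z [Wz [C1z C2z]].
have PF : ProperFilter F.
  apply: filter_from_proper => C [cC Cx]; apply: contrapT => WC.
  apply: noC; exists C; split => // z Cz; apply: contrapT => Wz.
  by apply: WC; exists z.
have cW : compact (~` W).
  by apply: (subclosed_compact _ cT) => //; exact: open_closedC.
have FW : F (~` W) by exists setT; [split => //; exact: clopenT | move=> z []].
have [z [Wz clz]] := cW F PF FW.
apply: Wz; apply: QW => C [cC Cx]; apply: contrapT => Cz.
have FC : F (~` W `&` C) by exists C.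
have nCz : nbhs z (~` C).
  by apply: open_nbhs_nbhs; split => //; exact: closed_openC (proj2 cC).
have [w [[_ Cw] nCw]] := clz _ _ FC nCz; exact: nCw.
Qed.

Hypothesis hT : hausdorff_space T.

Lemma closed_disjoint_open_separation (A B : set T) :
  closed A -> closed B -> A `&` B = set0 ->
  exists U V, [/\ open U, open V, A `<=` U, B `<=` V & U `&` V = set0].
Proof.
move=> cA cB AB.
have snB : set_nbhs A (~` B).
  apply/set_nbhsP; exists (~` B); split => //; first exact: closed_openC.
  by move=> z Az Bz; rewrite -[False]/(set0 z) -AB.
have [D sD cD] := compact_normal hT cT cA snB.
have [U [oU AU UD]] := (set_nbhsP A D).1 sD.
exists U, (~` closure D); split => //.
- exact/closed_openC/closed_closure.
- by move=> z Bz /cD.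
- apply/seteqP; split => // z [Uz]; apply.
  by apply: subset_closure; apply: UD.
Qed.

Lemma quasi_component_disjoint x (A B : set T) :
  closed A -> closed B -> A `&` B = set0 ->
  quasi_component x `<=` A `|` B -> A x -> quasi_component x `&` B = set0.
Proof.
move=> cA cB AB QAB Ax.
have [U [V [oU oV AU BV UV]]] := closed_disjoint_open_separation cA cB AB.
have QUV : quasi_component x `<=` U `|` V.
  by move=> z /QAB [/AU|/BV]; [left|right].
have [C [[oC cC] Cx CUV]] := quasi_component_sub_clopen (openU oU oV) QUV.
have CU_CV : C `&` U = C `&` ~` V.
  apply/seteqP; split => z [Cz Uz]; split => //.
    by move=> Vz; rewrite -[False]/(set0 z) -UV.
  by case: (CUV _ Cz).
have cCU : clopen (C `&` U).
  split; first exact: openI.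
  by rewrite CU_CV; apply: closedI => //; exact: open_closedC.
apply/seteqP; split => // z [Qz Bz]; rewrite -UV; split; last exact: BV.
by case: (Qz (C `&` U)) => //; split => //; split => //; exact: AU.
Qed.

Lemma quasi_component_connected x : connected (quasi_component x).
Proof.
apply: contrapT => /connectedPn [E [E0 QE [sFT sTF]]].
have Eclosed (A B : set T) : quasi_component x = A `|` B ->
    closure A `&` B = set0 -> closed A.
  move=> QAB clAB; rewrite closure_id; apply/seteqP; split.
    exact: subset_closure.
  move=> z clAz; have : closure (quasi_component x) z.
    by apply: closureS clAz; rewrite QAB; exact: subsetUl.
  rewrite -(closure_id _).1; last exact: quasi_component_closed.
  by rewrite QAB => -[//|Bz]; exfalso; rewrite -[False]/(set0 z) -clAB.
have split_absurd (A B : set T) : closed A -> closed B -> A `&` B = set0 ->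
    quasi_component x = A `|` B -> A x -> B !=set0 -> False.
  move=> cA cB AB QAB Ax [z Bz].
  have QsubAB : quasi_component x `<=` A `|` B by rewrite QAB.
  have := quasi_component_disjoint cA cB AB QsubAB Ax.
  by rewrite -[False]/(set0 z) => <-; split => //; rewrite QAB; right.
have cF : closed (E false) by exact: (Eclosed _ (E true)).
have cT' : closed (E true) by apply: (Eclosed _ (E false)); rewrite 1?setUC 1?setIC.
have EFT : E false `&` E true = set0 by exact: separated_disjoint.
have : quasi_component x x by exact: quasi_component_refl.
rewrite QE => -[EFx|ETx]; first exact: (split_absurd _ _ cF cT' EFT QE EFx).
by apply: (split_absurd _ _ cT' cF _ _ ETx); rewrite 1?setIC 1?setUC.
Qed.

Lemma totally_disconnected_clopen_nbhs : totally_disconnected [set: T] ->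
  forall x (U : set T), nbhs x U -> exists V, [/\ clopen V, V x & V `<=` U].
Proof.
move=> tdT x U xU.
have Qx : quasi_component x `<=` [set x].
  rewrite -(tdT x I); apply: connected_component_max => //.
    exact: quasi_component_refl.
  exact: quasi_component_connected.
have QU : quasi_component x `<=` U° by move=> _ /Qx ->.
have [V [cV Vx VU]] := quasi_component_sub_clopen (@open_interior _ U) QU.
by exists V; split => //; apply: subset_trans VU (@interior_subset _ U).
Qed.

End QuasiComponent.

Local Open Scope group_scope.

Section CongruenceModulo.
Variable G : groupTopType.
Implicit Types (K : set G) (x y z g : G).

Definition congr_mod K x y := K (x^-1 * y).

Definition central_mod K x := forall g, congr_mod K (x * g) (g * x).

Variable K : set G.
Hypothesis nK : is_normal_subgroup K.

Lemma congr_mod_refl x : congr_mod K x x.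
Proof. by case: nK => -[K1 _ _] _; rewrite /congr_mod mulVg. Qed.

Lemma congr_mod_sym x y : congr_mod K x y -> congr_mod K y x.
Proof. by case: nK => -[_ _ KV] _ /KV; rewrite invgM invgK. Qed.

Lemma congr_mod_trans x y z :
  congr_mod K x y -> congr_mod K y z -> congr_mod K x z.
Proof.
case: nK => -[_ KM _] _ Kxy Kyz.
by have := KM _ _ Kxy Kyz; rewrite -mulgA mulVKg.
Qed.

Lemma congr_mod_mull x y z : congr_mod K x y -> congr_mod K (z * x) (z * y).
Proof. by rewrite /congr_mod invgM -mulgA mulKg. Qed.

Lemma congr_mod_mulr x y z : congr_mod K x y -> congr_mod K (x * z) (y * z).
Proof.
by case: nK => _ KJ /(KJ _ z); rewrite /congr_mod invgM !mulgA.
Qed.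

Lemma congr_modM x y x' y' :
  congr_mod K x y -> congr_mod K x' y' -> congr_mod K (x * x') (y * y').
Proof.
move=> Kxy Kxy'; apply: (@congr_mod_trans _ (y * x')).
  exact: congr_mod_mulr.
exact: congr_mod_mull.
Qed.

Lemma congr_modV x y : congr_mod K x y -> congr_mod K x^-1 y^-1.
Proof.
case: nK => -[_ _ KV] KJ /KV /(KJ _ y^-1).
by rewrite /congr_mod invgK !invgM !invgK !mulgA mulgV mul1g.
Qed.

Lemma congr_modR x y x' y' :
  congr_mod K x y -> congr_mod K x' y' -> congr_mod K [~ x, x'] [~ y, y'].
Proof.
move=> Kxy Kxy'; rewrite /commg /conjg.
apply: congr_modM; first exact: congr_modV.
by apply: congr_modM; [exact: congr_modV | exact: congr_modM].
Qed.

Lemma central_mod1 : central_mod K 1.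
Proof. by move=> g; rewrite mul1g mulg1; exact: congr_mod_refl. Qed.

Lemma central_modM x y :
  central_mod K x -> central_mod K y -> central_mod K (x * y).
Proof.
move=> cx cy g; apply: (@congr_mod_trans _ (x * (g * y))).
  by rewrite -mulgA; apply/congr_mod_mull/cy.
by rewrite !mulgA; apply/congr_mod_mulr/cx.
Qed.

Lemma central_mod_prod t (c : 'I_t -> G) :
  (forall j, central_mod K (c j)) -> central_mod K (\prod_(j < t) c j).
Proof. by move=> cc; apply: big_ind => //; [exact: central_mod1 | exact: central_modM].
Qed.

Lemma prod_mul_central_mod t (f c : 'I_t -> G) :
  (forall j, central_mod K (c j)) ->
  congr_mod K ((\prod_(j < t) f j) * (\prod_(j < t) c j))
              (\prod_(j < t) (f j * c j)).
Proof.
elim: t f c => [|t IH] f c cc.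
  by rewrite !big_ord0 mulg1; exact: congr_mod_refl.
rewrite !big_ord_recr /=.
set F := \prod_(j < t) _; set C := \prod_(j < t) _.
apply: (@congr_mod_trans _ ((F * C) * (f ord_max * c ord_max))); last first.
  by apply/congr_mod_mulr/IH => j.
rewrite -!mulgA; apply: congr_mod_mull; rewrite !mulgA; apply: congr_mod_mulr.
by apply/congr_mod_sym/central_mod_prod => j.
Qed.

End CongruenceModulo.

Section ProductSet.
Variable G : groupTopType.

Lemma prod_set_ord0 (Gs : 'I_0 -> set G) : prod_set Gs = [set 1].
Proof.
apply/seteqP; split => x; first by move=> [f [_ ->]]; rewrite big_ord0.
by move=> ->; exists (fun _ => 1); split => [[]//|]; rewrite big_ord0.
Qed.

Lemma prod_set_recr t (Gs : 'I_t.+1 -> set G) :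
  prod_set Gs = (fun p : G * G => p.1 * p.2) @`
    (prod_set (fun j => Gs (widen_ord (leqnSn t) j)) `*` Gs ord_max).
Proof.
have lift_max j : lift ord_max j = widen_ord (leqnSn t) j.
  by apply: val_inj; exact: lift_max.
apply/seteqP; split => x.
  move=> [f [Gsf ->]]; rewrite big_ord_recr /=.
  exists (\prod_(j < t) f (widen_ord (leqnSn t) j), f ord_max) => //.
  by split => //; exists (fun j => f (widen_ord (leqnSn t) j)).
move=> [[a b] [[f [Gsf ->]] Gsb] <-] /=.
exists (fun j => if unlift ord_max j is Some j' then f j' else b); split.
  by move=> j; case: (unliftP ord_max j) => [j'|] ->; rewrite ?lift_max.
rewrite big_ord_recr /= unlift_none; congr (_ * _).
by apply: eq_bigr => j _; rewrite -lift_max liftK.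
Qed.

End ProductSet.

Section TopologicalGroup.
Variable G : groupTopType.
Hypothesis TG : is_topological_group G.

Lemma cvg_mulg (X : Type) (F : set_system X) {FF : Filter F} (f g : X -> G)
    (a b : G) :
  f @ F --> a -> g @ F --> b -> (fun x => f x * g x) @ F --> a * b.
Proof.
case: TG => mulC _.
exact: (@continuous2_cvg _ G G G _ _ f g (fun u v => u * v) a b (mulC (a, b))).
Qed.

Lemma nbhs_mulgl (a y : G) (B : set G) :
  nbhs (a * y) B -> nbhs y [set z | B (a * z)].
Proof. by apply: cvg_mulg; [exact: cvg_cst | exact: cvg_id]. Qed.

Lemma saturated_clopen (N Q : set G) : is_subgroup N -> nbhs 1 N ->
  (forall y y', congr_mod N y y' -> Q y -> Q y') -> clopen Q.
Proof.
move=> [_ _ NV] N1 QN.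
have Ncoset y : nbhs y [set z | N (y^-1 * z)].
  by apply: nbhs_mulgl; rewrite mulVg.
split.
  by rewrite openE => y Qy; apply: filterS (Ncoset y) => z /QN; apply.
rewrite -(setCK Q); apply: open_closedC; rewrite openE => y nQy.
apply: filterS (Ncoset y) => z /NV Nzy Qz; apply/nQy/(QN z) => //.
by move: Nzy; rewrite invgM invgK.
Qed.

Lemma open_subgroup (N : set G) : is_subgroup N -> nbhs 1 N -> open N.
Proof.
move=> sN N1; apply: (proj1 (saturated_clopen sN N1 _)) => y y' Nyy' Ny.
by case: sN => _ NM _; rewrite -(mulVKg y y'); apply: NM.
Qed.

(* [N] is the set of x whose insertion anywhere in a word never changes
   membership in [V]; it is a neighbourhood of 1 because [V] is locally
   constant and [G * G] is compact. *)
Lemma open_normal_subgroup_sub_clopen (V : set G) :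
  compact [set: G] -> clopen V -> V 1 ->
  exists N, [/\ is_normal_subgroup N, open N & N `<=` V].
Proof.
move=> cG cV V1.
pose N := [set x : G | forall a b, V (a * b) <-> V (a * (x * b))].
have sN : is_subgroup N.
  split => [a b|x y Nx Ny a b|x Nx a b]; first by rewrite mul1g.
  - by rewrite (Ny a b) (Nx a (y * b)) !mulgA.
  - by rewrite (Nx a (x^-1 * b)) mulVKg.
have nearV (p : G * G) : \forall q \near p & w \near (1 : G),
    V (q.1 * q.2) <-> V (q.1 * (w * q.2)).
  case: p => a b; pose F := filter_prod (nbhs (a, b)) (nbhs (1 : G)).
  have FF : Filter F by exact: filter_prod_filter.
  have ca : (fun q : (G * G) * G => q.1.1) @ F --> a.
    exact: cvg_comp cvg_fst cvg_fst.
  have cb : (fun q : (G * G) * G => q.1.2) @ F --> b.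
    exact: cvg_comp cvg_fst cvg_snd.
  have cw : (fun q : (G * G) * G => q.2) @ F --> (1 : G) by exact: cvg_snd.
  have Vab : \forall q \near F, V (q.1.1 * q.1.2) <-> V (a * b).
    exact: cvg_clopen_iff cV (cvg_mulg ca cb).
  have Vawb : \forall q \near F, V (q.1.1 * (q.2 * q.1.2)) <-> V (a * (1 * b)).
    exact: cvg_clopen_iff cV (cvg_mulg ca (cvg_mulg cw cb)).
  rewrite mul1g in Vawb.
  by apply: filterS (filterI Vab Vawb) => q [-> ->].
have N1 : nbhs 1 N.
  have cGG : compact [set: G * G] by rewrite -setXTT; exact: compact_setX.
  have : \forall w \near (1 : G),
      [set: G * G] `<=` (fun p => V (p.1 * p.2) <-> V (p.1 * (w * p.2))).
    exact: (compact_near_coveringP _).1 cGG G _ _ _ (fun p _ => nearV p).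
  by apply: filterS => w Vw a b; exact: (Vw (a, b) I).
exists N; split.
- split => // x g Nx a b.
  have -> : a * (g^-1 * (x * g) * b) = (a * g^-1) * (x * (g * b)).
    by rewrite !mulgA.
  by rewrite -(Nx (a * g^-1) (g * b)) -mulgA mulKg.
- exact: open_subgroup.
- by move=> x /(_ 1 1); rewrite !mulg1 mul1g => -[/(_ V1)].
Qed.

Lemma compact_prod_set t (Gs : 'I_t -> set G) :
  (forall j, compact (Gs j)) -> compact (prod_set Gs).
Proof.
elim: t Gs => [|t IH] Gs cGs.
  by rewrite prod_set_ord0; exact: compact_set1.
rewrite prod_set_recr; apply: continuous_compact.
  by apply: continuous_subspaceT; case: TG.
by apply: compact_setX => //; apply: IH.
Qed.

End TopologicalGroup.

Section Generation.
Variable G : groupTopType.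
Implicit Types (S H : set G).

Lemma gen_subgroup S : is_subgroup (gen S).
Proof.
split=> [H [[H1 _ _] _] | x y Sx Sy H HS | x Sx H HS] //.
- by case: (HS) => -[_ HM _] _; apply: HM; [apply: Sx | apply: Sy].
- by case: (HS) => -[_ _ HV] _; apply: HV; apply: Sx.
Qed.

Lemma cl_gen_subgroup S : is_subgroup (cl_gen S).
Proof.
split=> [H [[[H1 _ _] _] _] | x y Sx Sy H HS | x Sx H HS] //.
- by case: (HS) => -[[_ HM _] _] _; apply: HM; [apply: Sx | apply: Sy].
- by case: (HS) => -[[_ _ HV] _] _; apply: HV; apply: Sx.
Qed.

Lemma sub_gen S : S `<=` gen S.
Proof. by move=> x Sx H [_]; apply. Qed.

Lemma cl_gen_min S H : is_closed_subgroup H -> S `<=` H -> cl_gen S `<=` H.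
Proof. by move=> cH SH x; apply. Qed.

Lemma gen_sub_cl_gen S S' : S `<=` S' -> gen S `<=` cl_gen S'.
Proof.
by move=> SS' x Sx H [[sH _] S'H]; apply: Sx; split => //; apply: subset_trans S'H.
Qed.

Lemma gen_normal S :
  (forall s g, S s -> S (s ^ g)) -> is_normal_subgroup (gen S).
Proof.
move=> SJ; split; first exact: gen_subgroup.
move=> x g Sx H [[H1 HM HV] SH]; apply: (Sx [set y | H (y ^ g)]); split.
  split => /= [|u v Hu Hv|u Hu]; first by rewrite conj1g.
  - by rewrite conjMg; apply: HM.
  - by rewrite conjVg; apply: HV.
by move=> s Ss; apply: SH; apply: SJ.
Qed.

Lemma comms_conj (A : set G) :
  is_normal_subgroup A -> forall s g, comms A s -> comms A (s ^ g).
Proof.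
move=> [_ AJ] s g [x Ax [h _ <-]]; rewrite conjRg.
by exists (x ^ g); [exact: AJ | exists (h ^ g)].
Qed.

Lemma agamma_normal i : is_normal_subgroup (@agamma G i).
Proof. by elim: i => [|[|i] IH] //; exact/gen_normal/comms_conj. Qed.

Lemma agamma_sub_gamma i : @agamma G i `<=` @gamma G i.
Proof.
elim: i => [|[|i] IH] //=; apply: gen_sub_cl_gen => _ [x Ax [g _ <-]].
by exists x; [exact: IH | exists g].
Qed.

Lemma gamma_subgroup i : is_subgroup (@gamma G i).
Proof. by case: i => [|[|i]] //; exact: cl_gen_subgroup. Qed.

End Generation.

Section Saturation.
Variable G : groupTopType.
Variable N : set G.
Hypothesis nN : is_normal_subgroup N.

Definition saturation (A : set G) := [set y | exists2 a, A a & congr_mod N a y].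

Lemma saturation_normal A :
  is_normal_subgroup A -> is_normal_subgroup (saturation A).
Proof.
move=> [[A1 AM AV] AJ]; split; first split.
- by exists 1 => //; exact: congr_mod_refl.
- move=> x y [a Aa ax] [b Ab bx]; exists (a * b); first exact: AM.
  exact: congr_modM.
- by move=> x [a Aa ax]; exists a^-1; [exact: AV | exact: congr_modV].
- move=> x g [a Aa ax]; exists (a ^ g); first exact: AJ.
  by apply: congr_mod_mull; apply: congr_mod_mulr.
Qed.

Lemma normal_sub_saturation A : A 1 -> N `<=` saturation A.
Proof. by move=> A1 n Nn; exists 1 => //; rewrite /congr_mod invg1 mul1g. Qed.

Lemma saturation_congr A y y' :
  congr_mod N y y' -> saturation A y -> saturation A y'.
Proof. by move=> yy' [a Aa ay]; exists a => //; exact: congr_mod_trans yy'. Qed.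

End Saturation.

Section ModuloOpenNormalSubgroup.
Variable G : groupTopType.
Hypothesis TG : is_topological_group G.
Variable N : set G.
Hypothesis nN : is_normal_subgroup N.
Hypothesis oN : open N.

Local Notation K i := (saturation N (@agamma G i)).

Let nK i : is_normal_subgroup (K i) := saturation_normal nN (agamma_normal G i).

Let N1 : nbhs 1 N.
Proof. by apply: open_nbhs_nbhs; split => //; case: nN => -[]. Qed.

Lemma congr_mod_saturation i y y' : congr_mod N y y' -> congr_mod (K i) y y'.
Proof.
move=> yy'; have [[A1 _ _] _] := agamma_normal G i.
exact: (normal_sub_saturation (N := N) A1 yy').
Qed.

Lemma saturation_clopen i : clopen (K i).
Proof.
by apply: (saturated_clopen TG (proj1 nN) N1) => y y'; apply: saturation_congr.
Qed.

Lemma commg_saturation i x g : (1 <= i)%N -> K i x -> K i.+1 [~ x, g].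
Proof.
case: i => // i _ [a Aa ax]; exists [~ a, g].
  by apply: sub_gen; exists a => //; exists g.
by apply: congr_modR => //; exact: congr_mod_refl.
Qed.

Lemma gamma_sub_saturation i : (1 <= i)%N -> @gamma G i `<=` K i.
Proof.
elim: i => // -[_ _|i IH _].
  by move=> y _; exists y => //; exact: congr_mod_refl.
apply: cl_gen_min.
  by split; [exact: (proj1 (nK _)) | case: (saturation_clopen i.+2)].
by move=> _ [x Gx [g _ <-]]; apply: commg_saturation => //; exact: IH.
Qed.

Lemma gamma_central_mod i x :
  (1 <= i)%N -> @gamma G i x -> central_mod (K i.+1) x.
Proof.
move=> i1 Gx g; have [[_ _ KV] _] := nK i.+1.
have := KV _ (commg_saturation g i1 (gamma_sub_saturation i1 Gx)).
by rewrite /congr_mod invgR /commg /conjg invgM !mulgA.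
Qed.

Variable t : nat.
Variable Gs : 'I_t -> set G.
Hypothesis cGs : forall j, is_closed_subgroup (Gs j).
Hypothesis gamma_gen : forall i : nat, (1 <= i)%N ->
  @gamma G i = cl_gen (\bigcup_(j in [set: 'I_t]) (@gamma G i `&` Gs j)).

Definition factored_mod i := [set y | exists2 c : 'I_t -> G,
  (forall j, @gamma G i (c j) /\ Gs j (c j)) &
  congr_mod (K i.+1) (\prod_(j < t) c j) y].

Section Factored.
Variable i : nat.
Hypothesis i1 : (1 <= i)%N.

Let central c : @gamma G i c -> central_mod (K i.+1) c.
Proof. exact: gamma_central_mod. Qed.

Lemma factored_mod_subgroup : is_subgroup (factored_mod i).
Proof.
have [g1 gM gV] := gamma_subgroup G i.
split.
- exists (fun _ => 1); last by rewrite big1 //; exact: congr_mod_refl.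
  by move=> j; split => //; case: (cGs j) => -[].
- move=> x y [c Gc cx] [d Gd dy]; exists (fun j => c j * d j).
    move=> j; have [gc Gsc] := Gc j; have [gd Gsd] := Gd j.
    by split; [exact: gM | case: (cGs j) => -[_ GsM _] _; exact: GsM].
  have cd := prod_mul_central_mod (nK i.+1) c (fun j => central (proj1 (Gd j))).
  exact: (congr_mod_trans (nK _) (congr_mod_sym (nK _) cd)
                          (congr_modM (nK _) cx dy)).
- move=> x [c Gc cx]; exists (fun j => (c j)^-1).
    move=> j; have [gc Gsc] := Gc j.
    by split; [exact: gV | case: (cGs j) => -[_ _ GsV] _; exact: GsV].
  have cc := prod_mul_central_mod (nK i.+1) c
    (fun j => central (gV _ (proj1 (Gc j)))).
  have cc1 : \prod_(j < t) (c j * (c j)^-1) = 1.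
    by apply: big1 => j _; exact: mulgV.
  rewrite cc1 in cc.
  have := congr_mod_mull (\prod_(j < t) c j)^-1 cc.
  rewrite mulg1 mulgA mulVg mul1g => cV.
  exact: (congr_mod_trans (nK _) cV (congr_modV (nK _) cx)).
Qed.

Lemma factored_mod_closed : closed (factored_mod i).
Proof.
apply: (proj2 (saturated_clopen TG (proj1 nN) N1 _)) => y y' yy' [c Gc cy].
by exists c => //; exact: (congr_mod_trans (nK _) cy (congr_mod_saturation _ yy')).
Qed.

Lemma gamma_sub_factored_mod : @gamma G i `<=` factored_mod i.
Proof.
rewrite (gamma_gen i1); apply: cl_gen_min.
  by split; [exact: factored_mod_subgroup | exact: factored_mod_closed].
move=> y [j _ [Gy Gsy]]; have [g1 _ _] := gamma_subgroup G i.
exists (fun j' => if j' == j then y else 1).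
  by move=> j'; case: eqP => [->|_] //; split => //; case: (cGs j') => -[].
have -> : \prod_(j' < t) (if j' == j then y else 1) = y.
  by rewrite (big_only1 j) ?eqxx // => j' /negbTE ->.
exact: congr_mod_refl.
Qed.

Lemma saturation_sub_factored_mod : K i `<=` factored_mod i.
Proof.
move=> y [a Aa ay].
have [c Gc ca] := gamma_sub_factored_mod (agamma_sub_gamma Aa).
by exists c => //; exact: (congr_mod_trans (nK _) ca (congr_mod_saturation _ ay)).
Qed.

End Factored.

Lemma prod_set_meets_coset i : (1 <= i)%N ->
  forall x, exists2 p, prod_set Gs p & congr_mod (K i) p x.
Proof.
elim: i => // -[_ _|i IH _] x.
  exists 1; last by exists (1^-1 * x) => //; exact: congr_mod_refl.
  by exists (fun _ => 1); split; [move=> j; case: (cGs j) => -[] | rewrite big1].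
have [_ [f [Gsf ->]] fx] := IH (ltn0Sn i) x.
have [c Gc cfx] := saturation_sub_factored_mod (ltn0Sn i) fx.
exists (\prod_(j < t) (f j * c j)).
  exists (fun j => f j * c j); split => // j.
  by case: (cGs j) => -[_ GsM _] _; apply: GsM => //; case: (Gc j).
have fc := prod_mul_central_mod (nK i.+2) f
  (fun j => gamma_central_mod (ltn0Sn i) (proj1 (Gc j))).
apply: (congr_mod_trans (nK _) (congr_mod_sym (nK _) fc)).
by have := congr_mod_mull (\prod_(j < t) f j) cfx; rewrite mulVKg.
Qed.

Lemma prod_set_meets_open_normal_coset x : (exists n, @agamma G n `<=` N) ->
  exists2 p, prod_set Gs p & congr_mod N p x.
Proof.
move=> [n nilN].
have [m m1 nilNm] : exists2 m, (0 < m)%N & @agamma G m `<=` N.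
  by case: n nilN => [|n] nilN; [exists 1%N | exists n.+1].
have [p Pp [a Aa ax]] := prod_set_meets_coset m1 x.
exists p => //; case: nN => -[_ NM _] _.
by have := NM _ _ (nilNm _ Aa) ax; rewrite mulVKg.
Qed.

End ModuloOpenNormalSubgroup.

Local Close Scope group_scope.

Theorem lemma7p2 (G : groupTopType) (t : nat) (Gs : 'I_t -> set G) :
  is_pronilpotent G ->
  (forall j, is_closed_subgroup (Gs j)) ->
  cl_gen (\bigcup_(j in [set: 'I_t]) Gs j) = [set: G] ->
  (forall i : nat, (1 <= i)%N ->
     @gamma G i = cl_gen (\bigcup_(j in [set: 'I_t]) (@gamma G i `&` Gs j))) ->
  prod_set Gs = [set: G].
Proof.
move=> [[TG cG hG tdG] nilG] cGs _ gamma_gen.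
have cP : closed (prod_set Gs).
  apply: (compact_closed hG); apply: compact_prod_set => // j.
  exact: subclosed_compact (proj2 (cGs j)) cG _.
apply/seteqP; split => // x _; rewrite ((closure_id _).1 cP) => B xB.
have xB1 : nbhs 1%g [set z | B (x * z)%g].
  by apply: (nbhs_mulgl TG); rewrite monoid.mulg1.
have [V [cV V1 VB]] := totally_disconnected_clopen_nbhs cG hG tdG xB1.
have [N [nN oN NV]] := open_normal_subgroup_sub_clopen TG cG cV V1.
have [p Pp px] :=
  prod_set_meets_open_normal_coset TG nN oN cGs gamma_gen x (nilG N nN oN).
exists p; split => //.
by have := VB _ (NV _ (congr_mod_sym nN px)); rewrite /= monoid.mulVKg.
Qed.
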